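(* Let $n\ge3$ and equip $\mathcal{H}_n$ with the word metric for the generating set $\{g_1,\dots,g_{n-1}\}$. For $k\in\mathbb{N}$ let $B_k$ be the ball of radius $k$ about the identity, $C_k$ the set of elements of $\mathcal{H}_n$ of complexity exactly $k$, and $D_k\subseteq C_k$ the set of elements of $C_k$ of word length at most $k\log_{2n-2}k$. Then $$\lim_{k\to\infty}\frac{|D_k|}{|C_k|}=0.$$
   Context: Let $\mathbb{N}=\{1,2,3,\dots\}$, $\mathbb{Z}_n$ the integers modulo $n$, $R_n=\mathbb{Z}_n\times\mathbb{N}$ (ray $i$ is $\{(i,k):k\in\mathbb{N}\}$). Permutations act on the right. The Houghton group $\mathcal{H}_n$ is the group of permutations $\sigma$ of $R_n$ for which there exist $N\ge0$ and integers $t_i(\sigma)$ with $(i,k)\sigma=(i,k+t_i(\sigma))$ for all $i\in\mathbb{Z}_n$, $k\ge N$. For distinct $i,j$, $g_{ij}\in\mathcal{H}_n$ is given by $(i,m)g_{ij}=(i,m-1)$ for $m>1$, $(i,1)g_{ij}=(j,1)$, $(j,m)g_{ij}=(j,m+1)$ for $m\ge1$, fixing all points on other rays; $g_i=g_{i\,i+1}$. For $\sigma\in\mathcal{H}_n$ and $i\in\mathbb{Z}_n$, $p_i(\sigma)$ is the largest integer $k\ge1$ with $(i,k)\sigma\ne(i,k+t_i(\sigma))$ (automatically true if $k+t_i(\sigma)\le0$), and $0$ if no such $k$ exists; the complexity is $P(\sigma)=\sum_i p_i(\sigma)$. *)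

From Stdlib Require Import Reals ZArith.
From mathcomp Require Import all_boot.
Set Implicit Arguments. Unset Strict Implicit. Unset Printing Implicit Defensive.

(* Points of R_n = Z_n x N.  CONVENTION: the pair (i, m) with m : nat
   represents the point (i, m+1) of the paper (heights are shifted by one). *)
Definition pt (n : nat) := ('I_n * nat)%type.

(* g_{ij} (for i <> j): (i,k) -> (i,k-1) for k > 1, (i,1) -> (j,1),
   (j,k) -> (j,k+1), other points fixed.  In shifted coordinates: *)
Definition gij n (i j : 'I_n) (x : pt n) : pt n :=
  let: (l, m) := x in
  if l == i then (if m is m'.+1 then (i, m') else (j, 0%N))
  else if l == j then (j, m.+1) else (l, m).

Definition gi n (i : 'I_n) : pt n -> pt n := gij i (ordS i).

Definition translates n (s : pt n -> pt n) (t : 'I_n -> Z) (i : 'I_n) (m : nat) :=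
  exists m' : nat, Z.of_nat m' = (Z.of_nat m + t i)%Z /\ s (i, m) = (i, m').

Definition eventual_trans n (s : pt n -> pt n) (t : 'I_n -> Z) :=
  exists N : nat, forall (i : 'I_n) (m : nat), (N <= m)%N -> translates s t i m.

Definition inH n (s : pt n -> pt n) :=
  bijective s /\ exists t, eventual_trans s t.

(* p_i(s) = p : largest k >= 1 with (i,k)s <> (i,k+t_i) (true if k+t_i <= 0),
   0 if there is none.  (k = m+1 in shifted coordinates.) *)
Definition pcomp n (s : pt n -> pt n) (t : 'I_n -> Z) (i : 'I_n) (p : nat) :=
  (forall m : nat, (p <= m)%N -> translates s t i m) /\
  ((0 < p)%N -> ~ translates s t i p.-1).

Definition complexity_is n (s : pt n -> pt n) (k : nat) :=
  exists (t : 'I_n -> Z) (p : 'I_n -> nat),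
    eventual_trans s t /\ (forall i, pcomp s t i (p i)) /\ (\sum_(i < n) p i)%N = k.

(* Words in {g_1,...,g_{n-1}}^{+-1}; permutations act on the right, so the
   product s * h is "first s, then h" = h \o s. *)
Definition gen_letter n (h : pt n -> pt n) :=
  exists a : 'I_n, (0 < a)%N /\
    (h = gi a \/ ((forall x, h (gi a x) = x) /\ (forall x, gi a (h x) = x))).

Inductive word_of n : (pt n -> pt n) -> nat -> Prop :=
| word_nil : word_of (fun x => x) 0
| word_cons s L h : word_of s L -> gen_letter h -> word_of (fun x => h (s x)) L.+1.

Definition wordlen_le n (s : pt n -> pt n) (r : R) :=
  exists L : nat, word_of s L /\ Rle (INR L) r.

Definition Cset n (k : nat) (s : pt n -> pt n) := inH s /\ complexity_is s k.
Definition Dset n (k : nat) (s : pt n -> pt n) :=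
  Cset k s /\ wordlen_le s (Rmult (INR k) (Rdiv (ln (INR k)) (ln (INR (2 * n - 2)%N)))).

Definition has_card T (A : T -> Prop) (c : nat) :=
  exists f : 'I_c -> T, injective f /\ (forall x, A x <-> exists i, f i = x).

From HB Require Import structures.
From Stdlib Require Import Reals ZArith Lia Lra ClassicalEpsilon FunctionalExtensionality.
From mathcomp Require Import all_boot fingroup perm zify.
Set Implicit Arguments. Unset Strict Implicit. Unset Printing Implicit Defensive.

(* An element of [C_k] is determined by its translation vector and by the
   images of the points of height at most [k], both ranging over a finite
   set, so [C_k] is finite; and the [(k-1)!] permutations of the first [k]
   points of one ray that move the [k]-th point all lie in [C_k].  An element
   of [D_k] is the value of a freely reduced word of length [m <= k log_q k]
   over the [q = 2n-2] letters [g_i^{+-1}], and there are at most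
   [(m+1) q (q-1)^m] such words, i.e. [k^O(1) k^(a k)] with
   [a = log_q (q-1) < 1].  Since [(k-1)! >= k^k e^-k / k], the ratio
   [|D_k| / |C_k|] is eventually bounded by a constant times [1/k]. *)

(* Excluded middle gives every type, in particular [pt n -> pt n], a decidable
   equality; this is how subsets of the Houghton group are counted. *)
Definition classically (T : Type) : Type := T.

Section ClassicalEquality.
Variable T : Type.

Definition classical_eqb (x y : classically T) : bool := excluded_middle_informative (x = y).

Lemma classical_eqP : Equality.axiom classical_eqb.
Proof. by move=> x y; rewrite /classical_eqb; case: excluded_middle_informative; constructor. Qed.

HB.instance Definition _ := hasDecEq.Build (classically T) classical_eqP.

End ClassicalEquality.

Lemma has_card_size (T : eqType) (s : seq T) (P : T -> Prop) :
  uniq s -> (forall x, P x <-> x \in s) -> has_card P (size s).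
Proof.
move=> s_uniq Ps; exists (tnth (in_tuple s)); split; first exact/tuple_uniqP.
by move=> x; rewrite Ps; split=> [/(tnthP (in_tuple s))[i ->]|[i <-]]; [exists i | exact: mem_tnth].
Qed.

Lemma has_card_cover (D : finType) T (P : T -> Prop) (f : D -> T) :
  (forall x, P x -> exists y, f y = x) -> exists2 c, (c <= #|D|)%N & has_card P c.
Proof.
move=> Pf; pose Pb (x : classically T) : bool := excluded_middle_informative (P x).
have PbP x : Pb x <-> P x by rewrite /Pb; case: excluded_middle_informative.
set s := undup [seq x <- [seq f y : classically T | y <- enum D] | Pb x].
exists (size s); last first.
  apply: has_card_size; first exact: undup_uniq.
  move=> x; rewrite mem_undup mem_filter -PbP; split=> [Px|/andP[//]].
  by rewrite Px; have [y <-] := Pf x (proj1 (PbP x) Px); apply: map_f; rewrite mem_enum.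
by rewrite cardE (leq_trans (size_undup _)) // size_filter (leq_trans (count_size _ _)) ?size_map.
Qed.

Lemma leq_has_card (D : finType) T (P : T -> Prop) (h : D -> T) c :
  has_card P c -> injective h -> (forall y, P (h y)) -> (#|D| <= c)%N.
Proof.
move=> [e [_ Pe]] h_inj Ph.
rewrite cardE -(size_map (h : D -> classically T)) -[c]card_ord cardE -(size_map (e : _ -> classically T)).
apply: uniq_leq_size; first by rewrite map_inj_uniq ?enum_uniq.
move=> _ /mapP[y _ ->]; have [i <-] := proj1 (Pe (h y)) (Ph y).
by apply: map_f; rewrite mem_enum.
Qed.

(** * Finiteness of [C_k] *)

Lemma Cset_translates n k (s : pt n -> pt n) : Cset k s ->
  bijective s /\ exists t, forall i m, (k <= m)%N -> translates s t i m.
Proof.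
move=> [[s_bij _] [t [p [_ [p_spec <-]]]]]; split=> //; exists t => i m km.
by apply: (proj1 (p_spec i)); apply: leq_trans km; rewrite (bigD1 i) ?leq_addr.
Qed.

Section TranslationBounds.
Variables (n k : nat) (s : pt n -> pt n) (t : 'I_n -> Z).
Hypothesis s_bij : bijective s.
Hypothesis s_trans : forall i m, (k <= m)%N -> translates s t i m.

Lemma translation_ge i : (- Z.of_nat k <= t i)%Z.
Proof. by have [m' [E _]] := s_trans i (leqnn k); lia. Qed.

(* If [t i > n k], the [n k + 1] points [(i, 0..n k)] would all have their
   preimages among the [n k] points of height [< k]. *)
Lemma translation_le i : (t i <= Z.of_nat (n * k))%Z.
Proof.
have [g _ gK] := s_bij.
rewrite Z.le_ngt => lt_nk_t.
have low x : (x <= n * k)%N -> ((g (i, x)).2 < k)%N.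
  move=> x_le; case E: (g (i, x)) => [j m] /=; rewrite ltnNge; apply/negP => km.
  have [m' [Em' Es]] := s_trans j km.
  by have := gK (i, x); rewrite E Es => -[ej ex]; subst j; lia.
pose h (x : 'I_(n * k).+1) : 'I_n * 'I_k :=
  ((g (i, val x)).1, Sub (g (i, val x)).2 (low x (ltn_ord x))).
have h_inj : injective h.
  move=> x y /= E; have /= E1 := congr1 fst E; have /= E2 := congr1 (val \o snd) E.
  apply: val_inj.
  have : g (i, val x) = g (i, val y).
    by move: E1 E2; case: (g _) => ? ?; case: (g _) => ? ? /= -> ->.
  by move/(congr1 s); rewrite !gK => -[].
by have := leq_card h h_inj; rewrite card_prod !card_ord; lia.
Qed.

Lemma height_lt i m : (m < k)%N -> ((s (i, m)).2 < k + n * k)%N.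
Proof.
move=> mk; have [g sK _] := s_bij.
case E: (s (i, m)) => [j m''] /=; rewrite ltnNge; apply/negP => big.
have tj := translation_le (i := j).
have km0 : (k <= Z.to_nat (Z.of_nat m'' - t j))%N by lia.
have [m0 [Em0 Es]] := s_trans j km0.
have m0E : m0 = m'' by lia.
by have := congr1 g Es; rewrite m0E -E !sK => -[_]; lia.
Qed.

End TranslationBounds.

(* An element of [C_k] is coded by the images of the points of height [< k]
   and by the shifted translation vector [t + k]; the ranges come from
   [height_lt] and the translation bounds. *)
Definition decode_C n k
  (x : {ffun 'I_n * 'I_k -> 'I_n * 'I_(k + n * k)} * {ffun 'I_n -> 'I_(k + n * k).+1})
  (p : pt n) : pt n :=
  let: (i, m) := p in
  if insub m is Some m' then let: (j, v) := x.1 (i, m') in (j, val v)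
  else (i, m + x.2 i - k)%N.

Lemma decode_C_onto n k (s : pt n -> pt n) : Cset k s -> exists x, @decode_C n k x = s.
Proof.
move=> /Cset_translates[s_bij [t s_trans]].
have low i m (mk : (m < k)%N) := height_lt s_bij s_trans i mk.
exists ([ffun y => ((s (y.1, val y.2)).1, Sub (s (y.1, val y.2)).2 (low _ _ (ltn_ord y.2)))],
        [ffun i => inord (Z.to_nat (t i + Z.of_nat k))]).
apply: functional_extensionality => -[i m] /=.
case: insubP => [m' _ <-|]; first by rewrite ffunE /=; case: (s _).
rewrite -leqNgt => km; have [m'' [Em ->]] := s_trans i m km.
have t_ge := translation_ge s_trans (i := i); have t_le := translation_le s_bij s_trans (i := i).
by rewrite ffunE inordK; [f_equal|]; lia.
Qed.

(** * The lower bound [(k-1)! <= |C_k|] *)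

Section RayPerm.
Variables (n : nat) (r : 'I_n).

Definition ray_perm N (sigma : {perm 'I_N}) (p : pt n) : pt n :=
  let: (i, m) := p in
  if i == r then if insub m is Some m' then (i, val (sigma m')) else (i, m)
  else (i, m).

Lemma ray_permK N (sigma : {perm 'I_N}) : cancel (ray_perm sigma) (ray_perm sigma^-1).
Proof.
move=> [i m] /=; have [->|/negPf ir] := eqVneq i r; last by rewrite /= ir.
case: (@insubP _ _ 'I_N m) => [m' _ <-|m_ge] /=.
  by rewrite eqxx valK permK.
by rewrite eqxx insubN.
Qed.

Lemma ray_perm_bij N (sigma : {perm 'I_N}) : bijective (ray_perm sigma).
Proof.
by exists (ray_perm sigma^-1); [exact: ray_permK | have := ray_permK sigma^-1; rewrite invgK].
Qed.

Lemma ray_perm_high N (sigma : {perm 'I_N}) i m : (N <= m)%N -> ray_perm sigma (i, m) = (i, m).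
Proof. by move=> m_ge /=; rewrite insubN -?leqNgt // if_same. Qed.

Lemma ray_perm_inj N : injective (@ray_perm N).
Proof.
move=> s1 s2 E; apply/permP => m; have /= := congr1 (fun f => f (r, val m)) E.
by rewrite eqxx valK => -[/val_inj].
Qed.

Lemma ray_perm_C N (sigma : {perm 'I_N.+1}) : sigma ord_max != ord_max -> Cset N.+1 (ray_perm sigma).
Proof.
move=> moved; set s := ray_perm sigma.
have fixed i m : (i != r) || (N < m)%N -> translates s (fun _ => 0%Z) i m.
  move=> /orP[/negPf ir|m_gt]; exists m; split; try lia; first by rewrite /s /= ir.
  exact: ray_perm_high.
have tr0 : eventual_trans s (fun _ => 0%Z) by exists N.+1 => i m m_gt; apply: fixed; rewrite m_gt orbT.
split; first by split; [exact: ray_perm_bij | exists (fun _ => 0%Z)].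
exists (fun _ => 0%Z), (fun i => if i == r then N.+1 else 0%N); split=> //; split.
  move=> i; have [->|ir] := eqVneq i r; rewrite ?eqxx; split=> //.
  - by move=> m m_gt; apply: fixed; rewrite m_gt orbT.
  - move=> _ [m' [m'E]]; rewrite /s /= eqxx insubT //= => lt_N.
    have -> : Sub N lt_N = ord_max :> 'I_N.+1 by apply: val_inj.
    by move=> [sigmaE]; move/eqP: moved; apply; apply: val_inj; rewrite /= sigmaE; lia.
  - by move=> m _; apply: (fixed i m); rewrite ir.
by rewrite (bigD1 r) //= eqxx big1 ?addn0 // => i /negPf ->.
Qed.

End RayPerm.

Lemma fact_le_card_C n k c : (0 < n)%N -> (1 < k)%N -> has_card (@Cset n k) c -> (k.-1)`! <= c.
Proof.
case: n k => [//|n] [|[|N]] // _ _ card_C.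
pose lift_last (tau : {perm 'I_N.+1}) := lift_perm ord_max ord0 tau.
have lift_last_inj : injective lift_last.
  move=> t1 t2 E; apply/permP => m; apply: (@lift_inj _ ord0).
  by rewrite -!(lift_perm_lift ord_max) -/(lift_last _) E.
rewrite /= -card_Sn; apply: (leq_has_card card_C (h := fun tau => ray_perm ord0 (lift_last tau))).
  exact: inj_comp (@ray_perm_inj _ _ _) lift_last_inj.
by move=> tau; apply: ray_perm_C; rewrite lift_perm_id.
Qed.

(** * Reduced words in the generators *)

Lemma gijK n (i j : 'I_n) : i != j -> cancel (gij i j) (gij j i).
Proof.
move=> ij [l m] /=; have [->|li] := eqVneq l i.
  by case: m => [|m] /=; rewrite ?(negPf ij) eqxx.
by have [->|lj] := eqVneq l j; rewrite /= ?eqxx // (negPf lj) (negPf li).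
Qed.

Lemma ordS_neq n (a : 'I_n.+2) : a != ordS a.
Proof.
apply/eqP => /(congr1 val) /=; case: a => a /= lt_a.
have [lt_a1|ge_a1] := ltnP a.+1 n.+2; first by rewrite modn_small //; lia.
have -> : a.+1 = n.+2 by lia.
by rewrite modnn; lia.
Qed.

Section Words.
Variable n : nat.
Local Notation pt := (pt n.+2).

Definition letter := ('I_n.+1 * bool)%type.
Definition letter_inv (x : letter) : letter := (x.1, ~~ x.2).

(* The letter [(a, b)] stands for [g_(a+1)] or, if [b], for its inverse
   [g_(a+2),(a+1)]: generators of index [0] are excluded, as in [gen_letter]. *)
Definition letter_act (x : letter) : pt -> pt :=
  let a := lift ord0 x.1 in if x.2 then gij (ordS a) a else gi a.

Lemma letter_invK : involutive letter_inv.
Proof. by case=> a []. Qed.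

Lemma letter_actK x : cancel (letter_act x) (letter_act (letter_inv x)).
Proof.
case: x => a [] /=; rewrite /letter_act /gi /=; apply: gijK; last exact: ordS_neq.
by rewrite eq_sym ordS_neq.
Qed.

Lemma gen_letter_act (h : pt -> pt) : gen_letter h -> exists x, h = letter_act x.
Proof.
move=> [a [a_gt0 h_gen]].
case: (unliftP ord0 a) a_gt0 h_gen => [a' -> _|-> //] [->|[hK _]].
  by exists (a', false).
exists (a', true); apply: functional_extensionality => y.
by rewrite -[y in h y](letter_actK (a', true)) /= hK.
Qed.

Fixpoint word_act (w : seq letter) : pt -> pt :=
  if w is x :: w' then letter_act x \o word_act w' else id.

Lemma word_of_act s L : word_of s L -> exists2 w, size w = L & s = word_act w.
Proof.
elim=> [|s0 L0 h _ [w <- ->] /gen_letter_act[x ->]]; first by exists [::].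
by exists (x :: w).
Qed.

Definition no_cancel (x y : letter) := y != letter_inv x.

Fixpoint reduce (w : seq letter) : seq letter :=
  if w is x :: w' then
    if reduce w' is y :: w'' then
      if y == letter_inv x then w'' else x :: y :: w''
    else [:: x]
  else [::].

Lemma reduceP w :
  [/\ sorted no_cancel (reduce w), (size (reduce w) <= size w)%N & word_act (reduce w) =1 word_act w].
Proof.
elim: w => [|x w [sorted_w size_w act_w]] //=.
case: (reduce w) sorted_w size_w act_w => [|y w''] sorted_w size_w act_w /=.
  by split=> // p; rewrite /= -act_w.
have [yE|y_neq] := eqVneq y (letter_inv x).
  split; [exact: path_sorted sorted_w | by move: size_w => /=; lia |].
  by move=> p /=; rewrite -act_w /= yE -{1}(letter_invK x) letter_actK.
by split=> //= [|p]; [exact/andP | rewrite /= -act_w].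
Qed.

Definition letter_choice := 'I_#|{: letter}|.-1.

(* The letters allowed after [x] in a reduced word are numbered by [letter_choice]. *)
Definition next_letter (x : letter) (c : letter_choice) : letter :=
  enum_val (lift (enum_rank (letter_inv x)) c).

Fixpoint reduced_word (x : letter) (cs : seq letter_choice) : seq letter :=
  x :: if cs is c :: cs' then reduced_word (next_letter x c) cs' else [::].

Lemma reduced_word_onto x w : sorted no_cancel (x :: w) ->
  exists2 cs, size cs = size w & reduced_word x cs = x :: w.
Proof.
elim: w x => [|y w IHw] x /=; first by exists [::].
move=> /andP[xy /IHw[cs <- csE]].
have : enum_rank y != enum_rank (letter_inv x) by apply: contra xy => /eqP /enum_rank_inj ->.
rewrite eq_sym => /unlift_some[c yE _].
by exists (c :: cs); rewrite //= /next_letter -yE enum_rankK csE.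
Qed.

Lemma letter_choice_gt0 : (0 < #|{: letter}|.-1)%N.
Proof. by rewrite card_prod card_ord card_bool; lia. Qed.

Definition word_code R := ('I_R.+1 * letter * R.-tuple letter_choice)%type.

(* [(L, x, cs)] codes the reduced word of length [L] starting with [x] whose
   other letters are chosen by the first [L - 1] entries of [cs]. *)
Definition decode_word R (y : word_code R) : pt -> pt :=
  let: (L, x, cs) := y in
  if val L is L'.+1 then word_act (reduced_word x (take L' cs)) else id.

Lemma card_word_code R : #|{: word_code R}| = (R.+1 * (n.+1 * 2) * (n.+1 * 2).-1 ^ R)%N.
Proof. by rewrite !card_prod card_tuple !card_ord card_bool. Qed.

Lemma decode_word_onto R s L : word_of s L -> (L <= R)%N -> exists y : word_code R, decode_word y = s.
Proof.
move=> /word_of_act[w <- ->] size_w; have [red_w size_red act_red] := reduceP w.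
have c0 : letter_choice := Ordinal letter_choice_gt0.
case: (reduce w) red_w size_red act_red => [|x w'] red_w size_red act_red.
  exists (ord0, (ord0, false), [tuple of nseq R c0]).
  by apply: functional_extensionality => p; rewrite -act_red.
have [cs size_cs csE] := reduced_word_onto red_w.
have size_pad : size (cs ++ nseq (R - size cs) c0) == R.
  by rewrite size_cat size_nseq size_cs; apply/eqP; move: size_red => /=; lia.
have L_lt : (size (x :: w') < R.+1)%N by rewrite ltnS (leq_trans size_red).
exists (Ordinal L_lt, x, Tuple size_pad) => /=.
rewrite -size_cs take_size_cat // csE.
by apply: functional_extensionality => p; rewrite -act_red.
Qed.

End Words.

(** * Asymptotics *)

Local Open Scope R_scope.

Lemma exp_le_compat x y : x <= y -> exp x <= exp y.
Proof. by case/Rle_lt_or_eq_dec => [/exp_increasing/Rlt_le|->]; [|apply: Rle_refl]. Qed.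

Lemma ln_le_compat x y : 0 < x -> x <= y -> ln x <= ln y.
Proof. by move=> x_gt0; case/Rle_lt_or_eq_dec => [/(ln_increasing _ _ x_gt0)/Rlt_le|->]; [|apply: Rle_refl]. Qed.

Lemma ln_le_sub1 x : 0 < x -> ln x <= x - 1.
Proof. by move=> x_gt0; have := exp_ineq1_le (ln x); rewrite exp_ln //; lra. Qed.

Lemma ln_ge0 x : 1 <= x -> 0 <= ln x.
Proof. by move=> x_ge1; rewrite -ln_1; apply: ln_le_compat; lra. Qed.

Lemma INR_expn m e : INR (m ^ e) = INR m ^ e.
Proof. by elim: e => [|e IHe]; rewrite ?expn0 // expnS mult_INR IHe. Qed.

Lemma pow_exp_ln x e : 0 < x -> x ^ e = exp (INR e * ln x).
Proof. by move=> x_gt0; rewrite -ln_pow // exp_ln //; apply: pow_lt. Qed.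

Lemma pow_succ_le (k : nat) : INR k.+1 ^ k <= exp 1 * INR k ^ k.
Proof.
case: k => [|k]; first by have := exp_ineq1_le 1; rewrite /=; lra.
set x := INR k.+1; have x_gt0 : 0 < x by apply: lt_0_INR; lia.
have step : INR k.+2 <= x * exp (/ x).
  have := exp_ineq1_le (/ x); rewrite S_INR -/x => e_ge.
  by have := Rmult_le_compat_l _ _ _ (Rlt_le _ _ x_gt0) e_ge; rewrite Rmult_plus_distr_l Rinv_r; lra.
apply: Rle_trans (pow_incr _ _ k.+1 _) _; first by split; [apply: pos_INR | exact: step].
rewrite Rpow_mult_distr (pow_exp_ln _ (exp_pos _)) ln_exp -/x Rinv_r; lra.
Qed.

Lemma pow_self_le_fact_exp (k : nat) : INR k ^ k <= INR k`! * exp (INR k).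
Proof.
elim: k => [|k IHk]; first by rewrite fact0 /= exp_0; lra.
rewrite factS mult_INR S_INR exp_plus -S_INR -tech_pow_Rmult.
have k1_ge0 := pos_INR k.+1; have e_gt0 := exp_pos 1.
have := Rmult_le_compat_l _ _ _ (Rlt_le _ _ e_gt0) IHk; have := pow_succ_le k.
move=> h1 h2; have := Rmult_le_compat_l _ _ _ k1_ge0 (Rle_trans _ _ _ h1 h2); lra.
Qed.

Lemma exp_le_fact_pred (k : nat) : (0 < k)%N ->
  exp (INR k * ln (INR k) - INR k - ln (INR k)) <= INR (k.-1)`!.
Proof.
case: k => [//|k] _; set x := INR k.+1; have x_gt0 : 0 < x by apply: lt_0_INR; lia.
have := pow_self_le_fact_exp k.+1; rewrite factS mult_INR -/x (pow_exp_ln _ x_gt0) -/x /=.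
rewrite !Rminus_def !exp_plus !exp_Ropp exp_ln //.
have ex_gt0 := exp_pos x; have f_ge0 := pos_INR k`!.
have xe_gt0 : 0 < x * exp x by apply: Rmult_lt_0_compat.
move=> le; apply: (Rmult_le_reg_r _ _ _ xe_gt0).
rewrite (_ : _ * / exp x * / x * _ = exp (x * ln x)); first by lra.
by field; lra.
Qed.

Lemma word_count_le (q m : nat) (x : R) : (1 < q)%N -> 1 <= x ->
  INR m <= x * (ln x / ln (INR q)) + 1 ->
  INR (m.+1 * q * q.-1 ^ m) <=
  (/ ln (INR q) + 2) * INR q * INR q.-1 * x ^ 2 * exp (ln (INR q.-1) / ln (INR q) * (x * ln x)).
Proof.
move=> q_gt1 x_ge1 m_le.
have q1_ge1 : 1 <= INR q.-1 by apply: (le_INR 1); lia.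
have l_gt0 : 0 < ln (INR q) by rewrite -ln_1; apply: ln_increasing; [lra | apply: (lt_INR 1); lia].
have b_ge0 := ln_ge0 q1_ge1; have L_ge0 := ln_ge0 x_ge1.
have L_le : ln x <= x by have := @ln_le_sub1 x; lra.
set l := ln (INR q) in m_le l_gt0 *; set b := ln (INR q.-1) in b_ge0 *; set L := ln x in m_le L_ge0 L_le *.
have il_gt0 : 0 < / l by apply: Rinv_0_lt_compat.
have m1_le : INR m.+1 <= (/ l + 2) * x ^ 2.
  have : x * (L / l) <= x ^ 2 * / l by rewrite /Rdiv -Rmult_assoc; apply: Rmult_le_compat_r; nra.
  have : 1 <= x ^ 2 by nra.
  by rewrite S_INR; lra.
have q1_pow_le : INR q.-1 ^ m <= INR q.-1 * exp (b / l * (x * L)).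
  have -> : INR q.-1 = exp b by rewrite /b exp_ln; lra.
  rewrite (pow_exp_ln _ (exp_pos b)) ln_exp -exp_plus; apply: exp_le_compat.
  by have := Rmult_le_compat_r _ _ _ b_ge0 m_le; rewrite /Rdiv; nra.
rewrite !mult_INR INR_expn.
have q_ge0 := pos_INR q; have pow_ge0 : 0 <= INR q.-1 ^ m by apply: pow_le; lra.
have := Rmult_le_compat _ _ _ _ (pos_INR _) pow_ge0 m1_le q1_pow_le.
by have := exp_pos (b / l * (x * L)); nra.
Qed.

Lemma nat_floor (r : R) : 0 <= r ->
  exists m : nat, (forall L : nat, INR L <= r -> (L <= m)%N) /\ INR m <= r + 1.
Proof.
move=> r_ge0; have [up_gt up_le] := archimed r.
have up_ge0 : (0 <= up r)%Z by apply: le_IZR; lra.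
exists (Z.to_nat (up r)); rewrite INR_IZR_INZ Z2Nat.id //; split; last by lra.
move=> L L_le; have : IZR (Z.of_nat L) < IZR (up r) by rewrite -INR_IZR_INZ; lra.
by move/lt_IZR; lia.
Qed.

Lemma Un_cv_0_le_inv (u : nat -> R) (K : R) (N0 : nat) :
  (forall k, (N0 <= k)%N -> 0 <= u k <= K / INR k) -> Un_cv u 0.
Proof.
move=> u_le eps eps_gt0; have [N N_gt] := INR_unbounded (Rmax (INR N0) (K / eps)).
exists N => k k_ge; rewrite /R_dist Rminus_0_r.
have x_gt : Rmax (INR N0) (K / eps) < INR k by apply: Rlt_le_trans N_gt (le_INR _ _ k_ge).
have N0_le : (N0 <= k)%N by apply/leP/INR_le; have := Rmax_l (INR N0) (K / eps); lra.
have x_gt0 : 0 < INR k by have := pos_INR N0; have := Rmax_l (INR N0) (K / eps); lra.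
have [u_ge0 u_leK] := u_le k N0_le; rewrite Rabs_pos_eq //.
apply: Rle_lt_trans u_leK _; apply: (Rmult_lt_reg_r (INR k)) => //.
rewrite /Rdiv Rmult_assoc Rinv_l; last by lra.
rewrite Rmult_1_r {1}(_ : K = eps * (K / eps)); last by field; lra.
apply: Rle_lt_trans (Rmult_lt_compat_l _ _ _ eps_gt0 x_gt).
by apply: Rmult_le_compat_l; [lra | exact: Rmax_r].
Qed.

Lemma exponent_gap (beta x : R) : 0 < beta -> 1 <= x -> exp (2 / beta) <= x -> 8 / beta <= x ->
  3 * ln x + x - beta * (x * ln x) <= - ln x.
Proof.
move=> beta_gt0 x_ge1 x_ge_exp x_ge_8.
have L_ge : 2 / beta <= ln x by rewrite -[2 / beta]ln_exp; apply: ln_le_compat => //; exact: exp_pos.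
have div_le a y : a / beta <= y -> a <= beta * y.
  move=> le; have := Rmult_le_compat_l _ _ _ (Rlt_le _ _ beta_gt0) le.
  by rewrite /Rdiv Rmult_comm Rmult_assoc Rinv_l; lra.
by have := div_le _ _ L_ge; have := div_le _ _ x_ge_8; have := ln_ge0 x_ge1; nra.
Qed.

Lemma log_pred_ratio_lt1 (q : nat) : (1 < q)%N -> 0 < 1 - ln (INR q.-1) / ln (INR q).
Proof.
move=> q_gt1; have l_gt0 : 0 < ln (INR q).
  by rewrite -ln_1; apply: ln_increasing; [lra | apply: (lt_INR 1); lia].
suff : ln (INR q.-1) / ln (INR q) < 1 by lra.
apply: (Rmult_lt_reg_r _ _ _ l_gt0); rewrite /Rdiv Rmult_assoc Rinv_l ?Rmult_1_r ?Rmult_1_l; last by lra.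
by apply: ln_increasing; [apply: (lt_INR 0) | apply: lt_INR]; lia.
Qed.

Section RatioEstimate.
Variables (q k m c d : nat).
Let l := ln (INR q).
Let b := ln (INR q.-1).
Let x := INR k.
Let L := ln x.
Hypothesis q_gt1 : (1 < q)%N.
Hypothesis x_ge_exp : exp (2 / (1 - b / l)) <= x.
Hypothesis x_ge_8 : 8 / (1 - b / l) <= x.
Hypothesis c_ge : ((k.-1)`! <= c)%N.
Hypothesis m_le : INR m <= x * (L / l) + 1.
Hypothesis d_le : (d <= m.+1 * q * q.-1 ^ m)%N.

Lemma ratio_le_inv : INR d / INR c <= (/ l + 2) * INR q * INR q.-1 / x.
Proof.
set K := (/ l + 2) * INR q * INR q.-1.
have l_gt0 : 0 < l by rewrite /l -ln_1; apply: ln_increasing; [lra | apply: (lt_INR 1); lia].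
have beta_gt0 : 0 < 1 - b / l by exact: log_pred_ratio_lt1.
have x_ge1 : 1 <= x.
  by apply: Rle_trans x_ge_exp; have := exp_ineq1_le (2 / (1 - b / l)); have := Rdiv_lt_0_compat 2 _ Rlt_0_2 beta_gt0; lra.
have k_gt0 : (0 < k)%N by apply/ltP/INR_lt; rewrite -/x /=; lra.
have c_gt : exp (x * L - x - L) <= INR c.
  by apply: Rle_trans (exp_le_fact_pred k_gt0) _; apply: le_INR; apply/leP.
have d_lt : INR d <= K * exp (2 * L + b / l * (x * L)).
  rewrite exp_plus (_ : exp (2 * L) = x ^ 2); last by rewrite pow_exp_ln //; lra.
  apply: Rle_trans (le_INR _ _ (elimT leP d_le)) _.
  by apply: Rle_trans (word_count_le q_gt1 x_ge1 m_le) _; apply: Req_le; rewrite /K /l /b /L; ring.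
have e_gt0 := exp_pos (x * L - x - L).
apply: Rle_trans (_ : INR d / exp (x * L - x - L) <= _).
  by apply: Rmult_le_compat_l; [apply: pos_INR | apply: Rinv_le_contravar].
apply: Rle_trans (_ : K * exp (2 * L + b / l * (x * L)) / exp (x * L - x - L) <= _).
  by apply: Rmult_le_compat_r => //; apply/Rlt_le/Rinv_0_lt_compat.
have K_ge0 : 0 <= K.
  have il_gt0 : 0 < / l by apply: Rinv_0_lt_compat.
  by apply: Rmult_le_pos; [apply: Rmult_le_pos; [lra | apply: pos_INR] | apply: pos_INR].
rewrite /Rdiv Rmult_assoc -exp_Ropp -exp_plus -[/ x]exp_ln; last by apply: Rinv_0_lt_compat; lra.
rewrite ln_Rinv -?/L; last by lra.
apply: Rmult_le_compat_l => //; apply: exp_le_compat.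
by have := exponent_gap beta_gt0 x_ge1 x_ge_exp x_ge_8; rewrite /Rdiv -/L; lra.
Qed.

End RatioEstimate.

Lemma ratio_vanishes (q : nat) (c d : nat -> nat) : (1 < q)%N ->
  (forall k, (1 < k)%N -> ((k.-1)`! <= c k)%N) ->
  (forall k, (1 < k)%N -> exists m : nat,
     INR m <= INR k * (ln (INR k) / ln (INR q)) + 1 /\ (d k <= m.+1 * q * q.-1 ^ m)%N) ->
  Un_cv (fun k => INR (d k) / INR (c k)) 0.
Proof.
move=> q_gt1 c_ge d_le; set beta := 1 - ln (INR q.-1) / ln (INR q).
have [N0 N0_gt] := INR_unbounded (Rmax 2 (Rmax (exp (2 / beta)) (8 / beta))).
apply: (Un_cv_0_le_inv (K := (/ ln (INR q) + 2) * INR q * INR q.-1) (N0 := N0)) => k k_ge.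
have [x_gt2 [x_ge_exp x_ge_8]] : 2 < INR k /\ exp (2 / beta) <= INR k /\ 8 / beta <= INR k.
  by have := Rlt_le_trans _ _ _ N0_gt (le_INR _ _ (elimT leP k_ge)); rewrite !Rmax_Rlt; lra.
have k_gt1 : (1 < k)%N by apply/ltP/INR_lt; rewrite /=; lra.
have [m [m_le dk_le]] := d_le k k_gt1.
split; last exact: ratio_le_inv q_gt1 x_ge_exp x_ge_8 (c_ge k k_gt1) m_le dk_le.
rewrite /Rdiv; apply: Rmult_le_pos; first exact: pos_INR.
by apply/Rlt_le/Rinv_0_lt_compat/(lt_INR 0)/ltP; exact: leq_trans (fact_gt0 _) (c_ge k k_gt1).
Qed.

Lemma has_card_Cset n k : exists c, has_card (@Cset n k) c.
Proof.
have [c _ card_C] := has_card_cover (@decode_C_onto n k).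
by exists c.
Qed.

Lemma has_card_Dset n (n_gt2 : (2 < n)%N) k : exists d, has_card (@Dset n k) d /\
  exists m : nat, INR m <= INR k * (ln (INR k) / ln (INR (2 * n - 2))) + 1 /\
    (d <= m.+1 * (2 * n - 2) * (2 * n - 2).-1 ^ m)%N.
Proof.
case: n n_gt2 => [|[|[|n]]] // _; set q := (2 * n.+3 - 2)%N.
have r_ge0 : 0 <= INR k * (ln (INR k) / ln (INR q)).
  case: k => [|k]; first by rewrite Rmult_0_l; apply: Rle_refl.
  apply: Rmult_le_pos; first exact: pos_INR.
  apply: Rmult_le_pos; first by apply: ln_ge0; apply: (le_INR 1); lia.
  by apply/Rlt_le/Rinv_0_lt_compat; rewrite -ln_1; apply: ln_increasing; [lra | apply: (lt_INR 1); lia].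
have [m [m_max m_le]] := nat_floor r_ge0.
have [d d_le card_D] : exists2 d, (d <= #|{: word_code n.+1 m}|)%N & has_card (@Dset n.+3 k) d.
  by apply: has_card_cover => s [_ [L [s_word /m_max L_le]]]; exact: decode_word_onto s_word L_le.
rewrite card_word_code (_ : (n.+2 * 2)%N = q) in d_le; last by rewrite /q; lia.
by exists d; split=> //; exists m.
Qed.

Theorem mainTheorem6 (n : nat) (hn : (3 <= n)%N) :
  exists c d : nat -> nat,
    (forall k, has_card (@Cset n k) (c k) /\ has_card (@Dset n k) (d k)) /\
    Un_cv (fun k => Rdiv (INR (d k)) (INR (c k))) R0.
Proof.
have [c card_C] := choice _ (@has_card_Cset n).
have [d card_D] := choice _ (has_card_Dset hn).
exists c, d; split=> [k|]; first by have [] := card_D k; split.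
apply: (ratio_vanishes (q := (2 * n - 2)%N)) => [|k k_gt1|k _]; first lia.
  by apply: fact_le_card_C (card_C k); lia.
by have [] := card_D k.
Qed.
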